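(* Let $K\subset\mathbb{C}$ be a finite Galois extension of $\mathbb{Q}$ of degree $n$, with Galois group $G=\{\sigma_1,\dots,\sigma_n\}$, ring of integers $O_K$ and discriminant $D_K$. Let $\beta\in O_K$ be such that $(\sigma_1(\beta),\dots,\sigma_n(\beta))$ is a $\mathbb{Q}$-basis of $K$. Then $|\sigma_1(\beta)|^2+\cdots+|\sigma_n(\beta)|^2\geqslant|D_K|^{1/n}$. *)

From HB Require Import structures.
From mathcomp Require Import all_boot all_order all_algebra all_field.
Set Implicit Arguments. Unset Strict Implicit. Unset Printing Implicit Defensive.
Import Order.TTheory GRing.Theory Num.Theory.
Local Open Scope ring_scope.

Definition integral_over_Z (L : fieldExtType rat) (x : L) : Prop :=
  exists p : {poly int}, p \is monic /\ root (map_poly (fun z : int => z%:~R) p) x.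

(* w is an integral basis of the ring of integers O_K of K = L:
   its entries lie in O_K, are Q-linearly independent (hence Z-independent),
   and every element of O_K is a Z-linear combination of them. *)
Definition integral_basis (L : fieldExtType rat) (w : seq L) : Prop :=
  [/\ forall x, x \in w -> integral_over_Z x,
      free w &
      forall x : L, integral_over_Z x ->
        exists c : 'I_(size w) -> int, x = \sum_(i < size w) (c i)%:~R * w`_i].

Definition disc_of_basis (L : splittingFieldType rat) (w : seq L) : L :=
  \det (\matrix_(i < size w, j < size w) galTrace 1%VS fullv (w`_i * w`_j)).

From HB Require Import structures.
From mathcomp Require Import all_boot all_order all_algebra all_field all_fingroup.
Set Implicit Arguments. Unset Strict Implicit. Unset Printing Implicit Defensive.
Import Order.TTheory GRing.Theory Num.Theory.
Local Open Scope ring_scope.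

(* Let A = (iota (s_i w_j)) for an integral basis w. Then iota D_K = det (A^T A)
   = (det A)^2. The conjugates s_k beta are integral, hence integer combinations
   s_k beta = sum_j C_kj w_j, so B = (iota (s_i s_k beta)) equals A C^T, and
   det C is a nonzero integer because the s_k beta are free: |det A| <= |det B|.
   The eigenvalues of the Gram matrix B B^* are nonnegative, with product
   |det B|^2 and sum the squared entries of B, so by AM-GM |det B|^(2/n) is at
   most the mean squared row norm of B; and every row of B is a permutation of
   the conjugates of beta. *)

Lemma integral_over_Z_rmorph (L M : fieldExtType rat) (f : {rmorphism L -> M})
    (x : L) :
  integral_over_Z x -> integral_over_Z (f x).
Proof.
case=> p [p_monic px]; exists p; split=> //.
rewrite -[map_poly _ p](eq_map_poly (fun z => rmorph_int f z)) map_poly_comp.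
by rewrite rootE horner_map (rootP px) rmorph0.
Qed.

Lemma integral_basis_span (L : fieldExtType rat) (w : seq L) (x : L) :
  integral_basis w -> integral_over_Z x -> x \in <<w>>%VS.
Proof.
case=> _ _ spanw /spanw [c ->]; apply: memv_suml => j _.
rewrite -[_%:~R](rmorph_int (in_alg L)) mulr_algl.
exact/memvZ/memv_span/mem_nth.
Qed.

Lemma free_lincomb_det_neq0 (K : fieldType) (vT : vectType K) n
    (X : n.-tuple vT) (w : 'I_n -> vT) (C : 'M[K]_n) :
  free X -> (forall k : 'I_n, X`_k = \sum_j C k j *: w j) -> \det C != 0.
Proof.
move=> /freeP freeX XE; apply/negP => /det0P[u u_neq0 uC0].
case/eqP: u_neq0; apply/rowP => k; rewrite mxE; apply: freeX.
under eq_bigr => k' _ do rewrite XE scaler_sumr.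
rewrite exchange_big /=; apply: big1 => j _.
have /rowP/(_ j) := uC0; rewrite !mxE => uCj.
rewrite -[RHS](scale0r (w j)) -uCj scaler_suml; apply: eq_bigr => k' _.
by rewrite scalerA.
Qed.

Lemma gram_spectrum n (B : 'M[algC]_n) :
  exists d : 'rV[algC]_n, [/\ forall i, 0 <= d 0 i,
    \prod_i d 0 i = `|\det B| ^+ 2
    & \sum_i d 0 i = \sum_i \sum_k `|B i k| ^+ 2].
Proof.
pose M := B *m map_mx Num.conj B^T.
have M_normal : M \is normalmx.
  rewrite qualifE /=; suff -> : map_mx Num.conj M^T = M by [].
  apply/matrixP=> i j; rewrite !mxE rmorph_sum; apply: eq_bigr => k _.
  by rewrite !mxE rmorphM /= conjCK mulrC.
pose P := spectralmx M; pose d := spectral_diag M; exists d.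
have P_unitary : P \is unitarymx := spectral_unitarymx M.
have P_unit : P \in unitmx := unitarymx_unit P_unitary.
have ME : M = invmx P *m diag_mx d *m P := orthomx_spectralP M_normal.
have dE : diag_mx d = (P *m B) *m map_mx Num.conj (P *m B)^T.
  rewrite trmx_mul map_mxM -mulmxA (mulmxA B) -/M -(invmx_unitary P_unitary).
  by rewrite ME !mulmxA mulmxV // mul1mx -mulmxA mulmxV // mulmx1.
split.
- move=> i; have /matrixP/(_ i i) := dE; rewrite !mxE eqxx mulr1n => ->.
  by apply: sumr_ge0 => k _; rewrite !mxE -normCK exprn_ge0.
- have -> : \prod_i d 0 i = \det M.
    rewrite ME !det_mulmx det_diag mulrC mulrA -det_mulmx mulmxV //.
    by rewrite det1 mul1r.
  by rewrite normCK det_mulmx det_map_mx det_tr.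
- rewrite -mxtrace_diag.
  have -> : \tr (diag_mx d) = \tr M.
    by rewrite ME mxtrace_mulC mulmxA mulmxV // mul1mx.
  apply: eq_bigr => i _; rewrite mxE; apply: eq_bigr => k _.
  by rewrite !mxE normCK.
Qed.

Lemma rootC_sqr_det_le_mean n (B : 'M[algC]_n) : (0 < n)%N ->
  n.-root (`|\det B| ^+ 2) <= (\sum_i \sum_k `|B i k| ^+ 2) / n%:R.
Proof.
move=> n_gt0; have [d [d_ge0 <- <-]] := gram_spectrum B.
have := leif_rootC_AGM (A := predT) (fun i _ => d_ge0 i).
by rewrite card_ord => /leifP; case: ifP => _ => [/eqP -> | /ltW].
Qed.

Section EmbeddingMatrix.

Variables (L : splittingFieldType rat) (iota : {rmorphism L -> algC}).

Local Notation G := 'Gal({:L} / 1%VS)%g.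
Local Notation N := #|G|.

Definition embed_mx n (w : 'I_n -> L) : 'M[algC]_(N, n) :=
  \matrix_(i, j) iota ((enum_val i : gal_of {:L}) (w j)).

Definition gal_orbit (x : L) (k : 'I_N) : L := (enum_val k : gal_of {:L}) x.

Lemma embed_mx_trace n (w : 'I_n -> L) :
  map_mx iota (\matrix_(i, j) galTrace 1%VS fullv (w i * w j))
    = (embed_mx w)^T *m embed_mx w.
Proof.
apply/matrixP=> j l; rewrite !mxE /galTrace rmorph_sum big_enum_val.
by apply: eq_bigr => i _; rewrite !mxE !rmorphM.
Qed.

Lemma embed_mx_lincomb m n (v : 'I_m -> L) (w : 'I_n -> L)
    (C : 'M[int]_(m, n)) :
  (forall k, v k = \sum_j (C k j)%:~R * w j) ->
  embed_mx v = embed_mx w *m (map_mx intr C)^T.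
Proof.
move=> vE; apply/matrixP=> i k; rewrite !mxE vE !rmorph_sum.
by apply: eq_bigr => j _; rewrite !mxE !rmorphM !rmorph_int mulrC.
Qed.

Lemma embed_mx_orbit_row (beta : L) (i : 'I_N) :
  \sum_k `|embed_mx (gal_orbit beta) i k| ^+ 2
    = \sum_(s in G) `|iota (s beta)| ^+ 2.
Proof.
rewrite (reindex_astabs 'R%act (enum_val i)) /=; last first.
  by rewrite astabsR enum_valP.
rewrite [RHS]big_enum_val; apply: eq_bigr => k _.
by rewrite !mxE /gal_orbit galM ?memvf.
Qed.

Lemma root_disc_le_orbit_norm (w : 'I_N -> L) (beta : L) (C : 'M[int]_N) :
    (forall k, gal_orbit beta k = \sum_j (C k j)%:~R * w j) -> \det C != 0 ->
  N.-root `|iota (\det (\matrix_(i, j) galTrace 1%VS fullv (w i * w j)))|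
    <= \sum_(s in G) `|iota (s beta)| ^+ 2.
Proof.
move=> betaE detC_neq0; set S := \sum_(s in G) _.
have N_gt0 : (0 < N)%N by apply/card_gt0P; exists 1%g; apply: group1.
have detA : `|iota (\det (\matrix_(i, j) galTrace 1%VS fullv (w i * w j)))|
    = `|\det (embed_mx w)| ^+ 2.
  by rewrite -det_map_mx embed_mx_trace det_mulmx det_tr normrM expr2.
have detC_ge1 : 1 <= `|(\det C)%:~R : algC|.
  by rewrite -intr_norm ler1z -gtz0_ge1 normr_gt0.
have mean_rows :
    (\sum_i \sum_k `|embed_mx (gal_orbit beta) i k| ^+ 2) / N%:R = S.
  under eq_bigr do rewrite embed_mx_orbit_row.
  by rewrite sumr_const card_ord -[_ *+ _]mulr_natr mulfK // pnatr_eq0 -lt0n.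
rewrite detA -mean_rows.
apply: le_trans (rootC_sqr_det_le_mean (embed_mx (gal_orbit beta)) N_gt0).
rewrite ler_rootC // ?qualifE /= ?exprn_ge0 // (embed_mx_lincomb betaE).
rewrite det_mulmx det_tr det_map_mx normrM exprMn.
by rewrite ler_peMr ?exprn_ge0 ?exprn_ege1.
Qed.

End EmbeddingMatrix.

Theorem proposition2 (L : splittingFieldType rat) (iota : {rmorphism L -> algC})
  (beta : L) (w : seq L) :
  galois 1%VS {:L} ->
  integral_over_Z beta ->
  basis_of {:L} [seq (s : gal_of {:L}) beta | s <- enum 'Gal({:L} / 1%VS)%g] ->
  integral_basis w ->
  (\dim {:L}).-root `|iota (disc_of_basis w)|
    <= \sum_(s in 'Gal({:L} / 1%VS)%g) `|iota (s beta)| ^+ 2.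
Proof.
move=> galL int_beta /andP[/eqP span_orbit free_orbit] basis_w.
have int_orbit (s : gal_of {:L}) : integral_over_Z (s beta).
  exact: integral_over_Z_rmorph.
have dimL : \dim {:L} = #|'Gal({:L} / 1%VS)%g|.
  by have := galois_dim galL; rewrite dimv1 divn1.
have size_w : size w = \dim {:L}.
  have [_ /eqP <- _] := basis_w; apply/eqP; rewrite eqn_leq dimvS ?subvf //=.
  rewrite -span_orbit dimvS //; apply/span_subvP => _ /mapP[s _ ->].
  exact: integral_basis_span.
have [_ _] := basis_w; rewrite /disc_of_basis size_w dimL => coords.
have [c betaE] := fin_all_exists (fun s => coords _ (int_orbit s)).
pose C : 'M[int]_#|'Gal({:L} / 1%VS)%g| := \matrix_(k, j) c (enum_val k) j.
apply: (root_disc_le_orbit_norm iota (C := C)) => [k | ].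
  by rewrite /gal_orbit betaE; apply: eq_bigr => j _; rewrite mxE.
rewrite -(inj_eq (intr_inj (R := rat))) -det_map_mx.
apply: (free_lincomb_det_neq0 (w := fun j => w`_j) free_orbit) => k.
rewrite (nth_image 0) betaE; apply: eq_bigr => j _.
by rewrite !mxE -[_%:~R](rmorph_int (in_alg L)) mulr_algl.
Qed.
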